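(* Let $\mathcal{H}$ be an $n$-dimensional (real or complex) Hilbert space, let $F=\{f_i\}_{i=1}^N$ be a tight frame for $\mathcal{H}$, and let $\{q_i\}_{i=1}^N$ be the weight number sequence associated with a probability sequence $\{p_i\}_{i=1}^N$. Then the canonical dual $S_F^{-1}F$ is a 1-erasure probabilistic optimal dual (POD) of $F$ if and only if $S_F^{-1}F\in\Delta_F^{(1)}$.
   Context: A finite sequence $F=\{f_i\}_{i=1}^N$ in $\mathcal{H}$ is a frame if there are $A,B>0$ with $A\|f\|^2\le\sum_{i=1}^N|\langle f,f_i\rangle|^2\le B\|f\|^2$ for all $f$; it is tight if one can take $A=B$. The frame operator is $S_Ff=\sum_{i=1}^N\langle f,f_i\rangle f_i$ and the canonical dual is $S_F^{-1}F=\{S_F^{-1}f_i\}_{i=1}^N$. A frame $G=\{g_i\}_{i=1}^N$ is a dual of $F$ if $f=\sum_i\langle f,f_i\rangle g_i=\sum_i\langle f,g_i\rangle f_i$ for all $f$. A probability sequence is $\{p_i\}_{i=1}^N$ with $0\le p_i\le1$, $\sum p_i=1$; weight numbers $q_i=\frac{\sum_{j} p_j}{\sum_{j} p_j-p_i}\cdot\frac{N-1}{n}$. For $\Lambda\subseteq\{1,\dots,N\}$ the error operator is $E_{\Lambda,(F,G)}f=\sum_{i\in\Lambda}q_i\langle f,f_i\rangle g_i$. Set $\mathcal{O}_P^{(1)}(F,G)=\max_{|\Lambda|=1}\|E_{\Lambda,(F,G)}\|$ and $\mathcal{A}_P^{(1)}(F,G)=\max_{|\Lambda|=1}\frac{\|E_{\Lambda,(F,G)}\|+\rho(E_{\Lambda,(F,G)})}{2}$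 ($\rho$ = spectral radius). A dual $G$ of $F$ is a 1-erasure POD of $F$ if $\mathcal{O}_P^{(1)}(F,G)=\min\{\mathcal{O}_P^{(1)}(F,G'):G'\text{ a dual of }F\}$. $\Delta_F^{(1)}$ is the set of duals $G$ of $F$ minimizing $\mathcal{A}_P^{(1)}(F,G)$ over all duals of $F$ (1-erasure PASOD-frames). *)

From HB Require Import structures.
From mathcomp Require Import all_boot all_order all_algebra.
From mathcomp Require Import classical_sets boolp reals.
From mathcomp Require Import complex.
Set Implicit Arguments. Unset Strict Implicit. Unset Printing Implicit Defensive.
Import Order.TTheory GRing.Theory Num.Theory.
Local Open Scope ring_scope.
Local Open Scope classical_set_scope.

(* The Hilbert space H is modelled as K^n with K = R (if [isreal]) or
   K = C := R[i], both embedded in C^n = 'cV[R[i]]_n with the standard inner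
   product <x, y> = \sum_k x_k * conj(y_k) (linear in the first slot). *)

Section FrameDefs.
Variable R : realType.
Local Notation C := (R[i]).
Variables (isreal : bool) (n N : nat).

Definition conjv (x : 'cV[C]_n) : 'cV[C]_n := map_mx (@conjc R) x.

Definition inH (x : 'cV[C]_n) : Prop :=
  if isreal then forall k, x k 0 \is Num.real else True.

Definition inner (x y : 'cV[C]_n) : C := \sum_k x k 0 * (y k 0)^*%C.

Definition vnorm (x : 'cV[C]_n) : R := Num.sqrt (complex.Re (inner x x)).

Definition opnorm (A : 'M[C]_n) : R :=
  sup [set vnorm (A *m x) | x in [set x | inH x /\ vnorm x = 1]].

Definition specrad (A : 'M[C]_n) : R :=
  sup [set complex.Re `|l| | l in [set l : C | eigenvalue A l]].

Definition seqH (F : 'I_N -> 'cV[C]_n) : Prop := forall i, inH (F i).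

Definition frame_sum (F : 'I_N -> 'cV[C]_n) (f : 'cV[C]_n) : R :=
  \sum_i complex.Re (`|inner f (F i)| ^+ 2).

Definition is_frame (F : 'I_N -> 'cV[C]_n) : Prop :=
  seqH F /\
  exists A B : R, 0 < A /\ 0 < B /\
    forall f, inH f -> A * vnorm f ^+ 2 <= frame_sum F f <= B * vnorm f ^+ 2.

Definition is_tight_frame (F : 'I_N -> 'cV[C]_n) : Prop :=
  seqH F /\
  exists A : R, 0 < A /\ forall f, inH f -> frame_sum F f = A * vnorm f ^+ 2.

(* frame operator S_F f = \sum_i <f, f_i> f_i *)
Definition frame_op (F : 'I_N -> 'cV[C]_n) : 'M[C]_n :=
  \sum_i (F i *m (conjv (F i))^T).

Definition canon_dual (F : 'I_N -> 'cV[C]_n) : 'I_N -> 'cV[C]_n :=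
  fun i => invmx (frame_op F) *m F i.

Definition is_dual (F G : 'I_N -> 'cV[C]_n) : Prop :=
  is_frame G /\
  forall f, inH f ->
    f = \sum_i inner f (F i) *: G i /\ f = \sum_i inner f (G i) *: F i.

Definition prob_seq (p : 'I_N -> R) : Prop :=
  (forall i, 0 <= p i <= 1) /\ \sum_i p i = 1.

Definition weight (p : 'I_N -> R) (i : 'I_N) : R :=
  (\sum_j p j) / (\sum_j p j - p i) * ((N.-1)%:R / n%:R).

(* error operator E_{Lambda,(F,G)} f = sum_{i in Lambda} q_i <f,f_i> g_i *)
Definition err_op (p : 'I_N -> R) (L : {set 'I_N}) (F G : 'I_N -> 'cV[C]_n)
  : 'M[C]_n :=
  \sum_(i in L) (((weight p i)%:C)%C *: (G i *m (conjv (F i))^T)).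

Definition O1 (p : 'I_N -> R) (F G : 'I_N -> 'cV[C]_n) : R :=
  sup [set opnorm (err_op p L F G) | L in [set L : {set 'I_N} | #|L| = 1%N]].

Definition A1 (p : 'I_N -> R) (F G : 'I_N -> 'cV[C]_n) : R :=
  sup [set (opnorm (err_op p L F G) + specrad (err_op p L F G)) / 2
      | L in [set L : {set 'I_N} | #|L| = 1%N]].

Definition is_POD1 (p : 'I_N -> R) (F G : 'I_N -> 'cV[C]_n) : Prop :=
  is_dual F G /\ forall G', is_dual F G' -> O1 p F G <= O1 p F G'.

Definition in_Delta1 (p : 'I_N -> R) (F G : 'I_N -> 'cV[C]_n) : Prop :=
  is_dual F G /\ forall G', is_dual F G' -> A1 p F G <= A1 p F G'.

End FrameDefs.

From HB Require Import structures.
From mathcomp Require Import all_boot all_order all_algebra.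
From mathcomp Require Import classical_sets boolp reals.
From mathcomp Require Import complex.
From mathcomp Require Import ring lra.
Import Order.TTheory GRing.Theory Num.Theory Normc.
Set Implicit Arguments. Unset Strict Implicit. Unset Printing Implicit Defensive.
Local Open Scope ring_scope.

(* For a tight frame with bound [A] the canonical dual is [g = A^-1 F].  A
   single-erasure error operator is rank one, [x |-> q_i <x, f_i> g_i], so its
   norm is [q_i |g_i| |f_i|] and its spectral radius [q_i |<g_i, f_i>|]; by
   Cauchy-Schwarz [A1 <= O1] for every dual, with equality at [g].  Hence a
   PASOD canonical dual is a POD.  Conversely, if a dual [G'] had
   [A1 G' < A1 g = O1 g =: M], then [q_i Re <G'_i, f_i> < M] for every [i].
   Duals form an affine space, and a small step from [g] towards [G'] pushes
   every [q_i |g_i| |f_i| <= M] strictly below [M], contradicting the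
   O1-optimality of [g]. *)

Section ComplexNorm.
Variable R : realType.
Implicit Types (z : R[i]) (r : R).

Lemma normc_normr z : (normc z)%:C%C = `|z|.
Proof. by []. Qed.

Lemma normc_ge0 z : 0 <= normc z.
Proof. by case: z => a b; apply: sqrtr_ge0. Qed.

Lemma normc_real r : normc r%:C%C = `|r|.
Proof. by rewrite /normc /= expr0n addr0 sqrtr_sqr. Qed.

Lemma normc_sqrE z : (normc z ^+ 2)%:C%C = z * z^*%C.
Proof. by rewrite rmorphXn /= normc_normr sqr_normc. Qed.

Lemma Re_normr_sqr z : complex.Re (`|z| ^+ 2) = normc z ^+ 2.
Proof. by rewrite -normc_normr -rmorphXn. Qed.

Lemma Re_le_normc z : complex.Re z <= normc z.
Proof. by rewrite -lecR normc_normr; apply: le_trans (normc_ge_Re z); rewrite lecR ler_norm. Qed.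

End ComplexNorm.

Section InnerProduct.
Variables (R : realType) (n : nat).
Local Notation C := (R[i]).
Implicit Types (x y z : 'cV[C]_n) (a : C).

Lemma innerDl x y z : inner (x + y) z = inner x z + inner y z.
Proof. by rewrite /inner -big_split; apply: eq_bigr => k _; rewrite mxE mulrDl. Qed.

Lemma innerZl a x z : inner (a *: x) z = a * inner x z.
Proof. by rewrite /inner mulr_sumr; apply: eq_bigr => k _; rewrite mxE mulrA. Qed.

Lemma innerNl x z : inner (- x) z = - inner x z.
Proof. by rewrite -scaleN1r innerZl mulN1r. Qed.

Lemma inner_suml (I : Type) (r : seq I) (P : pred I) (E : I -> 'cV[C]_n) z :
  inner (\sum_(i <- r | P i) E i) z = \sum_(i <- r | P i) inner (E i) z.
Proof.
have inner0l : inner 0 z = 0 by rewrite -(scale0r 0) innerZl mul0r.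
exact: (big_morph _ (fun x y => innerDl x y z) inner0l).
Qed.

Lemma innerC x y : inner y x = (inner x y)^*%C.
Proof.
rewrite /inner rmorph_sum; apply: eq_bigr => k _.
by rewrite rmorphM /= conjcK mulrC.
Qed.

Lemma innerDr x y z : inner z (x + y) = inner z x + inner z y.
Proof. by rewrite innerC innerDl rmorphD /= -!innerC. Qed.

Lemma innerZr a x z : inner z (a *: x) = a^*%C * inner z x.
Proof. by rewrite innerC innerZl rmorphM /= -innerC. Qed.

Lemma innerNr x z : inner z (- x) = - inner z x.
Proof. by rewrite innerC innerNl rmorphN /= -innerC. Qed.

Lemma inner0r z : inner z 0 = 0.
Proof. by rewrite -(scale0r 0) innerZr conjc0 mul0r. Qed.

Lemma inner_ge0 x : 0 <= inner x x.
Proof. by apply: sumr_ge0 => k _; apply: mulcJ_ge0. Qed.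

Lemma inner_eq0 x : (inner x x == 0) = (x == 0).
Proof.
apply/idP/eqP => [|->]; last by rewrite inner0r.
rewrite psumr_eq0 => [/allP x0|k _]; last exact: mulcJ_ge0.
apply/matrixP => k j; rewrite (ord1 j) mxE; apply/eqP.
by rewrite -normr_eq0 -sqrf_eq0 sqr_normc; apply: x0; rewrite mem_index_enum.
Qed.

Lemma vnorm_bnd x : 0 <= vnorm x.
Proof. exact: sqrtr_ge0. Qed.

Lemma vnormE x : (vnorm x ^+ 2)%:C%C = inner x x.
Proof.
have x_ge0 := inner_ge0 x; have Re_ge0 : 0 <= complex.Re (inner x x).
  by move: x_ge0; rewrite lecE => /andP[].
by rewrite sqr_sqrtr // RRe_real // ger0_real.
Qed.

Lemma vnorm_eq0 x : (vnorm x == 0) = (x == 0).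
Proof.
apply/eqP/eqP => [x0|->]; last by rewrite /vnorm inner0r sqrtr0.
by apply/eqP; rewrite -inner_eq0 -vnormE x0 expr0n.
Qed.

Lemma inner_normC_le x y : inner x y * (inner x y)^*%C <= inner x x * inner y y.
Proof.
set a := inner x x; set b := inner y y; set v := inner x y.
have [b0|b_neq0] := eqVneq b 0.
  have /eqP := b0; rewrite /b inner_eq0 => /eqP y0.
  by rewrite /v y0 inner0r mul0r mulr_ge0 ?inner_ge0.
have b_gt0 : 0 < b by rewrite lt_def b_neq0 inner_ge0.
have := inner_ge0 (b *: x - v *: y).
have -> : inner (b *: x - v *: y) (b *: x - v *: y) = b * (a * b - v * v^*%C).
  rewrite !(innerDl, innerDr, innerNl, innerNr, innerZl, innerZr) -/a -/b -/v.
  rewrite (innerC x y) -/v /b -innerC -/b; ring.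
by rewrite pmulr_rge0 // subr_ge0 mulrC.
Qed.

Lemma normc_inner_le x y : normc (inner x y) <= vnorm x * vnorm y.
Proof.
rewrite -(@ler_pXn2r _ 2) ?nnegrE ?normc_ge0 ?mulr_ge0 ?vnorm_bnd //.
rewrite -lecR normc_sqrE exprMn [leRHS]rmorphM /= !vnormE.
exact: inner_normC_le.
Qed.

Lemma vnormZ a x : vnorm (a *: x) = normc a * vnorm x.
Proof.
apply/eqP; rewrite -(@eqrXn2 _ 2) ?mulr_ge0 ?normc_ge0 ?vnorm_bnd //.
apply/eqP/complexI; rewrite exprMn [RHS]rmorphM /= normc_sqrE !vnormE.
by rewrite innerZl innerZr mulrA mulrC mulrA.
Qed.

End InnerProduct.

Section Subspace.
Variables (R : realType) (b : bool) (n : nat).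
Implicit Types (x y : 'cV[R[i]]_n).

Lemma inH_add x y : inH b x -> inH b y -> inH b (x + y).
Proof. by rewrite /inH; case: b => // x_real y_real k; rewrite mxE rpredD. Qed.

Lemma inH_opp x : inH b x -> inH b (- x).
Proof. by rewrite /inH; case: b => // x_real k; rewrite mxE rpredN. Qed.

Lemma inH_scale_real (r : R) x : inH b x -> inH b (r%:C%C *: x).
Proof.
rewrite /inH; case: b => // x_real k; rewrite mxE; apply: rpredM (x_real k).
by apply/complex_realP; exists r.
Qed.

End Subspace.

Local Open Scope classical_set_scope.

Section Supremum.
Variable R : realType.
Implicit Types (E : set R) (c x : R).

Lemma sup_ge0 E : (forall x, E x -> 0 <= x) -> 0 <= sup E.
Proof.
move=> E_ge0; have [supE|/sup_out -> //] := pselect (has_sup E).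
have [[x Ex] _] := supE; exact: le_trans (E_ge0 x Ex) (sup_upper_bound supE Ex).
Qed.

Lemma ge0_ge_sup E c : 0 <= c -> (forall x, E x -> x <= c) -> sup E <= c.
Proof.
move=> c_ge0 E_le; have [E0|E_neq0] := eqVneq E set0; first by rewrite E0 sup0.
by apply: ge_sup => //; apply/set0P.
Qed.

Lemma le_sup_mem E c x : (forall y, E y -> y <= c) -> E x -> x <= sup E.
Proof. by move=> E_le Ex; apply: sup_upper_bound => //; split; [exists x|exists c]. Qed.

Lemma sup_singletons N (h : {set 'I_N} -> R) : (forall i, 0 <= h [set i]%SET) ->
  sup [set h L | L in [set L : {set 'I_N} | #|L| = 1%N]] = \big[Num.max/0]_i h [set i]%SET.
Proof.
move=> h_ge0; set E := [set h L | L in _].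
have E_le y : E y -> y <= \big[Num.max/0]_i h [set i]%SET.
  by move=> [L /= /eqP /cards1P [i ->] <-]; apply: le_bigmax.
have E1 i : E (h [set i]%SET) by exists [set i]%SET => //=; rewrite cards1.
apply/le_anti/andP; split; first exact: ge0_ge_sup (bigmax_ge_id _ _ _ _) E_le.
apply: bigmax_le => [|i _]; last exact: le_sup_mem E_le (E1 i).
by apply: sup_ge0 => y [L /= /eqP /cards1P [i ->] <-].
Qed.

End Supremum.

Section RankOne.
Variables (R : realType) (b : bool) (n : nat).
Local Notation C := (R[i]).
Implicit Types (x f g : 'cV[C]_n) (c l : C).

(* [outer g f] is the rank-one operator [x |-> <x, f> g]. *)
Definition outer g f : 'M[C]_n := g *m (conjv f)^T.

Lemma conjv_trmx_mul f x : (conjv f)^T *m x = (inner x f)%:M.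
Proof.
apply/matrixP => i j; rewrite (ord1 i) (ord1 j) !mxE /= mulr1n.
by apply: eq_bigr => k _; rewrite !mxE mulrC.
Qed.

Lemma mul_outer c g f x : (c *: outer g f) *m x = (c * inner x f) *: g.
Proof. by rewrite -scalemxAl -mulmxA conjv_trmx_mul mul_mx_scalar scalerA. Qed.

Lemma eigenvalue_outer c g f l :
  eigenvalue (c *: outer g f) l -> l = 0 \/ l = c * inner g f.
Proof.
move=> /eigenvalueP [v v_eig v_neq0].
have [s vg] : exists s, v *m g = s%:M by exists ((v *m g) 0 0); apply: mx11_scalar.
have v_outer : v *m (c *: outer g f) = (c * s) *: (conjv f)^T.
  by rewrite -scalemxAr mulmxA vg mul_scalar_mx scalerA.
have : (v *m (c *: outer g f)) *m g = (l * s)%:M.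
  by rewrite v_eig -scalemxAl vg scale_scalar_mx.
rewrite v_outer -scalemxAl conjv_trmx_mul scale_scalar_mx => /matrixP /(_ 0 0).
rewrite !mxE /= !mulr1n => eq_ls.
have [s0|s_neq0] := eqVneq s 0; last by right; apply: (mulIf s_neq0); rewrite -eq_ls; ring.
left; move: v_eig; rewrite v_outer s0 mulr0 scale0r => /esym /eqP.
by rewrite scaler_eq0 (negPf v_neq0) orbF => /eqP.
Qed.

Lemma specrad_outer c g f : specrad (c *: outer g f) = normc (c * inner g f).
Proof.
rewrite /specrad; set E := [set _ | _ in _].
have E_le y : E y -> y <= normc (c * inner g f).
  move=> [l /= /eigenvalue_outer [] -> <-]; last exact: lexx.
  by rewrite normc0 normc_ge0.
apply/le_anti/andP; split; first exact: ge0_ge_sup (normc_ge0 _) E_le.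
have [->|cgf_neq0] := eqVneq (c * inner g f) 0.
  by rewrite normc0; apply: sup_ge0 => y [l _ <-]; apply: normc_ge0.
apply: (le_sup_mem E_le); exists (c * inner g f) => //=.
apply/eigenvalueP; exists (conjv f)^T.
  by rewrite -scalemxAr mulmxA conjv_trmx_mul mul_scalar_mx scalerA mulrC.
apply: contra cgf_neq0 => /eqP f0.
have := conjv_trmx_mul f g; rewrite f0 mul0mx => /matrixP /(_ 0 0).
by rewrite !mxE /= mulr1n => <-; rewrite mulr0.
Qed.

Lemma opnorm_outer c g f : inH b f ->
  opnorm b (c *: outer g f) = normc c * (vnorm g * vnorm f).
Proof.
move=> f_in; rewrite /opnorm; set E := [set _ | _ in _].
have E_le y : E y -> y <= normc c * (vnorm g * vnorm f).
  move=> [x [_ x1] <-]; rewrite mul_outer vnormZ normcM -mulrA.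
  rewrite ler_wpM2l ?normc_ge0 // mulrC ler_wpM2l ?vnorm_bnd //.
  by have := normc_inner_le x f; rewrite x1 mul1r.
apply/le_anti/andP; split.
  by apply: ge0_ge_sup E_le; rewrite !mulr_ge0 ?normc_ge0 ?vnorm_bnd.
have [f0|f_neq0] := eqVneq f 0.
  rewrite f0 /vnorm inner0r sqrtr0 !mulr0.
  by apply: sup_ge0 => y [x _ <-]; apply: vnorm_bnd.
have nf_gt0 : 0 < vnorm f by rewrite lt_def vnorm_eq0 f_neq0 vnorm_bnd.
pose u := ((vnorm f)^-1)%:C%C *: f.
have u1 : vnorm u = 1.
  by rewrite vnormZ normc_real ger0_norm ?invr_ge0 ?vnorm_bnd // mulVf ?gt_eqF.
have uf : inner u f = (vnorm f)%:C%C.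
  rewrite innerZl -vnormE -rmorphM /=; congr (_%:C%C).
  by rewrite expr2 mulrA mulVf ?gt_eqF ?mul1r.
apply: (le_sup_mem E_le); exists u; first by split => //; apply: inH_scale_real.
by rewrite mul_outer vnormZ normcM uf normc_real ger0_norm ?vnorm_bnd // mulrAC mulrA.
Qed.

End RankOne.

Section SingleErasure.
Variables (R : realType) (b : bool) (n N : nat).
Variables (p : 'I_N -> R) (F G : 'I_N -> 'cV[R[i]]_n).
Local Notation q := (weight n p).

Lemma weight_ge0 : prob_seq p -> (forall i, p i < 1) -> forall i, 0 <= q i.
Proof.
move=> [_ sum1] p_lt1 i; rewrite /weight sum1 !mulr_ge0 ?invr_ge0 ?ler0n //.
by rewrite subr_ge0 ltW.
Qed.

Lemma err_op1 i : err_op p [set i]%SET F G = (q i)%:C%C *: outer (G i) (F i).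
Proof. exact: big_set1. Qed.

Hypotheses (q_ge0 : forall i, 0 <= q i) (F_in : seqH b F).

Lemma O1E : O1 b p F G = \big[Num.max/0]_i (q i * (vnorm (G i) * vnorm (F i))).
Proof.
have E i : opnorm b (err_op p [set i]%SET F G) = q i * (vnorm (G i) * vnorm (F i)).
  by rewrite err_op1 (opnorm_outer _ _ (F_in i)) normc_real ger0_norm.
rewrite /O1 (@sup_singletons _ _ (fun L => opnorm b (err_op p L F G))).
  by apply: eq_bigr => i _; apply: E.
by move=> i; rewrite E mulr_ge0 ?q_ge0 // mulr_ge0 ?vnorm_bnd.
Qed.

Lemma A1E : A1 b p F G =
  \big[Num.max/0]_i (q i * (vnorm (G i) * vnorm (F i) + normc (inner (G i) (F i))) / 2).
Proof.
have E i : (opnorm b (err_op p [set i]%SET F G) + specrad (err_op p [set i]%SET F G)) / 2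
    = q i * (vnorm (G i) * vnorm (F i) + normc (inner (G i) (F i))) / 2.
  by rewrite err_op1 (opnorm_outer _ _ (F_in i)) specrad_outer normcM normc_real ger0_norm ?mulrDr.
rewrite /A1 (@sup_singletons _ _ (fun L => (opnorm b (err_op p L F G) + specrad (err_op p L F G)) / 2)).
  by apply: eq_bigr => i _; apply: E.
move=> i; rewrite E divr_ge0 ?ler0n // mulr_ge0 ?q_ge0 //.
by rewrite addr_ge0 ?normc_ge0 ?mulr_ge0 ?vnorm_bnd.
Qed.

Lemma A1_le_O1 : A1 b p F G <= O1 b p F G.
Proof.
rewrite A1E O1E; apply: le_bigmax2 => i _.
have := normc_inner_le (G i) (F i); have := q_ge0 i; nra.
Qed.

End SingleErasure.

Section TightFrame.
Variables (R : realType) (b : bool) (n N : nat).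
Local Notation C := (R[i]).
Implicit Types (x y : 'cV[C]_n) (M : 'M[C]_n).

Lemma inner_delta M j k : inner (M *m delta_mx k 0) (delta_mx j 0) = M j k.
Proof.
rewrite -colE /inner (bigD1 j) //= big1 => [|l /negPf l_neq_j].
  by rewrite !mxE !eqxx conjc1 mulr1 addr0.
by rewrite !mxE l_neq_j conjc0 mulr0.
Qed.

Lemma inner_mul_addv M x y : inner (M *m (x + y)) (x + y) =
  inner (M *m x) x + inner (M *m y) y + (inner (M *m x) y + inner (M *m y) x).
Proof. by rewrite mulmxDr !(innerDl, innerDr); ring. Qed.

(* In the real case the quadratic form only sees the symmetric part of [M]. *)
Lemma quad_form_eq0 M : (b -> forall j k, M j k = M k j) ->
  (forall x, inH b x -> inner (M *m x) x = 0) -> M = 0.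
Proof.
move=> M_sym Q0.
have e_in j : inH b (delta_mx j 0 : 'cV[C]_n).
  by rewrite /inH; case: b => // k; rewrite mxE realn.
have M_anti j k : M j k + M k j = 0.
  have := Q0 _ (inH_add (e_in k) (e_in j)).
  by rewrite inner_mul_addv !Q0 // !inner_delta !add0r.
have {}M_sym j k : M j k = M k j.
  case: b M_sym e_in Q0 => [-> //|_ _ Q0].
  have := Q0 (delta_mx k 0 + 'i%C *: delta_mx j 0) I.
  rewrite inner_mul_addv !Q0 // -scalemxAr innerZl innerZr !inner_delta add0r.
  have -> : ('i%C)^*%C = - 'i%C :> C by apply/eqP; rewrite eq_complex /= oppr0 !eqxx.
  rewrite add0r mulNr addrC -mulrBr => /eqP; rewrite mulf_eq0 subr_eq0.
  by case/orP => [|/eqP //]; rewrite eq_complex /= oner_eq0 andbF.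
apply/matrixP => j k; have := M_anti j k; rewrite M_sym -mulr2n -mulr_natl.
by move/eqP; rewrite mulf_eq0 pnatr_eq0 /= mxE => /eqP.
Qed.

Variable F : 'I_N -> 'cV[C]_n.

Lemma frame_op_mul x : frame_op F *m x = \sum_i inner x (F i) *: F i.
Proof.
rewrite /frame_op mulmx_suml; apply: eq_bigr => i _.
by rewrite -mulmxA conjv_trmx_mul mul_mx_scalar.
Qed.

Lemma inner_frame_op x : inner (frame_op F *m x) x = (frame_sum F x)%:C%C.
Proof.
rewrite frame_op_mul inner_suml /frame_sum rmorph_sum; apply: eq_bigr => i _.
rewrite innerZl (innerC x (F i)) -sqr_normc; apply/esym/RRe_real.
by rewrite rpredX // normr_real.
Qed.

Lemma frame_op_sym : seqH b F -> b -> forall j k, frame_op F j k = frame_op F k j.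
Proof.
move=> F_in b_true j k; rewrite /frame_op !summxE; apply: eq_bigr => i _.
have F_real l : (F i l 0)^*%C = F i l 0.
  by move: (F_in i); rewrite /inH b_true => /(_ l) /complex_realP [r ->]; rewrite conjc_real.
by rewrite !mxE !big_ord1 !mxE !F_real mulrC.
Qed.

Lemma tight_frame_opE (A : R) : seqH b F ->
  (forall f, inH b f -> frame_sum F f = A * vnorm f ^+ 2) -> frame_op F = (A%:C%C)%:M.
Proof.
move=> F_in F_tight; apply/subr0_eq/quad_form_eq0.
  move=> b_true j k; rewrite !mxE (frame_op_sym F_in b_true j k).
  by rewrite eq_sym.
move=> x x_in; rewrite mulmxBl mul_scalar_mx innerDl innerNl innerZl.
by rewrite inner_frame_op F_tight // rmorphM /= vnormE subrr.
Qed.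

Lemma canon_dual_tight (A : R) : A != 0 -> seqH b F ->
  (forall f, inH b f -> frame_sum F f = A * vnorm f ^+ 2) ->
  canon_dual F = fun i => (A^-1)%:C%C *: F i.
Proof.
move=> A_neq0 F_in F_tight; apply: funext => i.
by rewrite /canon_dual (tight_frame_opE F_in F_tight) invmx_scalar mul_scalar_mx fmorphV.
Qed.

End TightFrame.

Section Duals.
Variables (R : realType) (b : bool) (n N : nat).
Local Notation C := (R[i]).
Implicit Types (f x : 'cV[C]_n) (F G : 'I_N -> 'cV[C]_n).

Lemma vnorm_col_inner F f : vnorm (\col_i inner f (F i)) ^+ 2 = frame_sum F f.
Proof.
apply: complexI; rewrite vnormE /frame_sum rmorph_sum; apply: eq_bigr => i _.
rewrite !mxE -sqr_normc; apply/esym/RRe_real.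
by rewrite rpredX // normr_real.
Qed.

Lemma frame_sum_le G f : frame_sum G f <= (\sum_i vnorm (G i) ^+ 2) * vnorm f ^+ 2.
Proof.
rewrite /frame_sum mulr_suml; apply: ler_sum => i _.
rewrite Re_normr_sqr mulrC -exprMn ler_pXn2r ?nnegrE ?normc_ge0 ?mulr_ge0 ?vnorm_bnd //.
exact: normc_inner_le.
Qed.

(* Cauchy-Schwarz in C^N, applied to |f|^2 = \sum_i <f, F i> <G i, f>. *)
Lemma reconstruction_lower_bound F G (B : R) f : 0 < B ->
  frame_sum F f <= B * vnorm f ^+ 2 -> f = \sum_i inner f (F i) *: G i ->
  B^-1 * vnorm f ^+ 2 <= frame_sum G f.
Proof.
move=> B_gt0 F_bessel f_rec.
set u := \col_i inner f (F i); set w := \col_i inner f (G i).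
have f_uw : inner f f = inner u w.
  rewrite {1}f_rec inner_suml [RHS]/inner; apply: eq_bigr => i _.
  by rewrite innerZl !mxE -innerC.
have f2_le : vnorm f ^+ 2 <= vnorm u * vnorm w.
  by rewrite -[vnorm f ^+ 2]ger0_norm ?sqr_ge0 // -normc_real vnormE f_uw normc_inner_le.
have f4_le : (vnorm f ^+ 2) ^+ 2 <= frame_sum F f * frame_sum G f.
  rewrite -(vnorm_col_inner F) -(vnorm_col_inner G) -exprMn.
  by rewrite ler_pXn2r ?nnegrE ?sqr_ge0 ?mulr_ge0 ?vnorm_bnd.
have G_ge0 : 0 <= frame_sum G f.
  by apply: sumr_ge0 => i _; rewrite Re_normr_sqr sqr_ge0.
rewrite -(ler_pM2l B_gt0) mulrA mulfV ?gt_eqF // mul1r.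
have [->|f_neq0] := eqVneq (vnorm f ^+ 2) 0; first exact: mulr_ge0 (ltW B_gt0) G_ge0.
have f2_gt0 : 0 < vnorm f ^+ 2 by rewrite lt_def f_neq0 sqr_ge0.
rewrite -(ler_pM2l f2_gt0) -expr2; apply: le_trans f4_le _.
by rewrite mulrA [_ * B]mulrC ler_wpM2r.
Qed.

Lemma frame_of_reconstruction F G (B : R) : 0 < B -> seqH b G ->
  (forall f, inH b f -> frame_sum F f <= B * vnorm f ^+ 2) ->
  (forall f, inH b f -> f = \sum_i inner f (F i) *: G i) -> is_frame b G.
Proof.
move=> B_gt0 G_in F_bessel G_rec; split => //.
exists B^-1, (\sum_i vnorm (G i) ^+ 2 + 1); split; first by rewrite invr_gt0.
split; first by rewrite ltr_wpDl ?sumr_ge0 // => i _; rewrite sqr_ge0.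
move=> f f_in; apply/andP; split.
  exact: reconstruction_lower_bound (F_bessel f f_in) (G_rec f f_in).
apply: le_trans (frame_sum_le G f) _.
by rewrite ler_wpM2r ?sqr_ge0 // lerDl.
Qed.

Lemma is_dual_affine F G1 G2 (t : R) : is_frame b F ->
  is_dual b F G1 -> is_dual b F G2 -> is_dual b F (fun i => G1 i + t%:C%C *: (G2 i - G1 i)).
Proof.
move=> [_ [A [B [_ [B_gt0 F_bnd]]]]] [[G1_in _] G1_rec] [[G2_in _] G2_rec].
have rec f : inH b f ->
    f = \sum_i inner f (F i) *: (G1 i + t%:C%C *: (G2 i - G1 i)) /\
    f = \sum_i inner f (G1 i + t%:C%C *: (G2 i - G1 i)) *: F i.
  move=> f_in; have [f1 f1'] := G1_rec f f_in; have [f2 f2'] := G2_rec f f_in.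
  split.
    under eq_bigr do rewrite scalerDr scalerA mulrC -scalerA scalerBr.
    by rewrite big_split /= -scaler_sumr sumrB -f1 -f2 subrr scaler0 addr0.
  under eq_bigr do rewrite innerDr innerZr conjc_real innerDr innerNr scalerDl -scalerA scalerBl.
  by rewrite big_split /= -scaler_sumr sumrB -f1' -f2' subrr scaler0 addr0.
split; last exact: rec.
apply: (frame_of_reconstruction B_gt0) => [i|f f_in|f f_in]; last exact: (rec f f_in).1.
  by apply: inH_add (G1_in i) _; apply/inH_scale_real/inH_add/inH_opp.
by case/andP: (F_bnd f f_in).
Qed.

End Duals.

Section Perturbation.
Variables (R : realType) (n : nat).
Local Notation C := (R[i]).

Lemma vnorm_addZ_sqr (g h : 'cV[C]_n) (t : R) : vnorm (g + t%:C%C *: h) ^+ 2 =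
  vnorm g ^+ 2 + 2 * t * complex.Re (inner h g) + t ^+ 2 * vnorm h ^+ 2.
Proof.
apply: complexI; rewrite vnormE !rmorphD /= vnormE [(t ^+ 2 * _)%:C%C]rmorphM /= vnormE.
rewrite !rmorphM /= ReJ_add rmorph_nat -innerC.
rewrite !(innerDl, innerDr, innerZl, innerZr) conjc_real (innerC g h).
by field.
Qed.

(* With [c := 2 (M - m) M + 2 m (M - m - s) > 0], for [t <= 1/2] the gap
   [M^2 - (m^2 + 2 t m s + t^2 K)] is at least [t (c - t K)]. *)
Lemma quadratic_lt_sqr (m M s K : R) : 0 <= m <= M -> 0 < M -> m + s < M -> 0 <= K ->
  exists2 d, 0 < d & forall t, 0 < t <= d -> m ^+ 2 + 2 * t * m * s + t ^+ 2 * K < M ^+ 2.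
Proof.
move=> /andP [m_bnd m_le] M_gt0 ms_lt K_ge0.
set c := 2 * (M - m) * M + 2 * m * (M - m - s).
have c_gt0 : 0 < c.
  rewrite /c; have [m_lt|m_ge] := ltP m M; first nra.
  have mM : m = M by apply/le_anti/andP.
  subst m; nra.
have K1_gt0 : 0 < K + 1 by lra.
exists (Num.min (1 / 2) (c / (K + 1))) => [|t /andP [t_gt0]].
  by rewrite lt_min !divr_gt0.
rewrite le_min => /andP [t_le_half t_le].
have tK_lt : t * K < c.
  have : t * (K + 1) <= c by rewrite -ler_pdivlMr.
  lra.
have : 0 < t * (c - t * K) by rewrite mulr_gt0 // subr_gt0.
have : 0 <= (M - m) * (M + m - 2 * t * m - 2 * t * M).
  by rewrite mulr_ge0 // ?subr_ge0 //; nra.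
rewrite /c; nra.
Qed.

Lemma inner_scale_self (a : R) (f : 'cV[C]_n) : 0 <= a ->
  inner (a%:C%C *: f) f = (vnorm (a%:C%C *: f) * vnorm f)%:C%C.
Proof.
move=> a_ge0; rewrite innerZl -vnormE vnormZ normc_real ger0_norm //.
by rewrite -rmorphM /= mulrA.
Qed.

Lemma perturbed_term_lt (q a M : R) (f g' : 'cV[C]_n) : 0 <= q -> 0 <= a -> 0 < M ->
  q * (vnorm (a%:C%C *: f) * vnorm f) <= M -> q * complex.Re (inner g' f) < M ->
  exists2 d, 0 < d & forall t, 0 < t <= d ->
    q * (vnorm (a%:C%C *: f + t%:C%C *: (g' - a%:C%C *: f)) * vnorm f) < M.
Proof.
move=> q_ge0 a_ge0 M_gt0; set g := a%:C%C *: f; set h := g' - g => m_le ms_lt.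
set m := q * (vnorm g * vnorm f); set s := q * complex.Re (inner h f).
have gf := inner_scale_self f a_ge0; rewrite -/g in gf.
have ms_eq : m + s = q * complex.Re (inner g' f).
  rewrite /s /h innerDl innerNl gf.
  by case: (inner g' f) => x y; rewrite /= /m; ring.
have m_bnd : 0 <= m <= M by rewrite m_le mulr_ge0 ?mulr_ge0 ?vnorm_bnd.
have K_ge0 : 0 <= (q * vnorm f) ^+ 2 * vnorm h ^+ 2 by rewrite mulr_ge0 ?sqr_ge0.
rewrite -ms_eq in ms_lt.
have [d d_gt0 quad_lt] := quadratic_lt_sqr m_bnd M_gt0 ms_lt K_ge0.
exists d => // t /quad_lt quad_t.
rewrite -(@ltr_pXn2r _ 2) ?nnegrE ?(ltW M_gt0) ?mulr_ge0 ?vnorm_bnd //.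
apply: le_lt_trans quad_t; rewrite le_eqVlt; apply/orP; left.
have Re_hg : complex.Re (inner h g) = a * complex.Re (inner h f).
  by rewrite innerZr conjc_real; case: (inner h f) => x y; rewrite /=; ring.
have ng : vnorm g = a * vnorm f by rewrite vnormZ normc_real ger0_norm.
by rewrite exprMn exprMn vnorm_addZ_sqr Re_hg /m /s ng; apply/eqP; ring.
Qed.

End Perturbation.

Section CanonicalDual.
Variables (R : realType) (b : bool) (n N : nat).
Variables (F : 'I_N -> 'cV[R[i]]_n) (p : 'I_N -> R) (A : R).
Hypotheses (q_ge0 : forall i, 0 <= weight n p i) (F_in : seqH b F) (A_gt0 : 0 < A).
Hypothesis F_tight : forall f, inH b f -> frame_sum F f = A * vnorm f ^+ 2.
Local Notation q := (weight n p).
Local Notation g := (canon_dual F).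

Lemma canon_dualE i : g i = (A^-1)%:C%C *: F i.
Proof. by rewrite (canon_dual_tight (lt0r_neq0 A_gt0) F_in F_tight). Qed.

Lemma A1_eq_O1_canon_dual : A1 b p F g = O1 b p F g.
Proof.
rewrite A1E // O1E //; apply: eq_bigr => i _.
rewrite canon_dualE inner_scale_self ?invr_ge0 ?ltW // normc_real.
by rewrite ger0_norm ?mulr_ge0 ?vnorm_bnd // -mulr2n mulrnAr -mulr_natr mulfK ?pnatr_eq0.
Qed.

Lemma exists_dual_O1_lt G' : is_dual b F g -> is_dual b F G' ->
  A1 b p F G' < A1 b p F g -> exists2 G, is_dual b F G & O1 b p F G < O1 b p F g.
Proof.
move=> g_dual G'_dual A1_lt; rewrite -A1_eq_O1_canon_dual.
set M := A1 b p F g in A1_lt *.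
have M_gt0 : 0 < M by apply: le_lt_trans A1_lt; rewrite A1E // bigmax_ge_id.
have term_lt i : exists2 d, 0 < d & forall t, 0 < t <= d ->
    q i * (vnorm (g i + t%:C%C *: (G' i - g i)) * vnorm (F i)) < M.
  rewrite canon_dualE; apply: perturbed_term_lt => //; first by rewrite invr_ge0 ltW.
    by rewrite -canon_dualE /M A1_eq_O1_canon_dual O1E //; apply: le_bigmax.
  apply: le_lt_trans A1_lt; rewrite A1E //; apply: le_trans (le_bigmax _ _ i).
  have := Re_le_normc (inner (G' i) (F i)); have := normc_inner_le (G' i) (F i).
  have := q_ge0 i; nra.
have [d d_gt0 d_lt] := fin_all_exists2 term_lt.
set t := \big[Num.min/1]_i d i.
have t_gt0 : 0 < t by apply: lt_bigmin.
exists (fun i => g i + t%:C%C *: (G' i - g i)).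
  apply: is_dual_affine g_dual G'_dual; split => //.
  by exists A, A; do 2!split => //; move=> f f_in; rewrite F_tight // lexx.
rewrite O1E //; apply: bigmax_lt => // i _; apply: d_lt.
by rewrite t_gt0 bigmin_le.
Qed.

End CanonicalDual.

Theorem theorem3p4 (R : realType) (isreal : bool) (n N : nat)
  (F : 'I_N -> 'cV[R[i]]_n) (p : 'I_N -> R) :
  (0 < n)%N ->
  is_tight_frame isreal F ->
  prob_seq p ->
  (forall i, p i < 1) ->
  (is_POD1 isreal p F (canon_dual F) <-> in_Delta1 isreal p F (canon_dual F)).
Proof.
move=> _ [F_in [A [A_gt0 F_tight]]] p_prob p_lt1.
have q_ge0 := weight_ge0 n p_prob p_lt1.
split=> [[g_dual g_POD]|[g_dual g_PASOD]]; split=> [//|G' G'_dual].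
  rewrite leNgt; apply/negP => /(exists_dual_O1_lt q_ge0 F_in A_gt0 F_tight g_dual G'_dual).
  by case=> G G_dual; rewrite ltNge g_POD.
rewrite -(A1_eq_O1_canon_dual q_ge0 F_in A_gt0 F_tight).
exact: le_trans (g_PASOD G' G'_dual) (A1_le_O1 _ q_ge0 F_in).
Qed.
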